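(* Let $\mathcal U=(\mathcal U^{ij}_{\alpha\beta})$ be a four-index complex array, and let $(X_1,Y_1,X_2,Y_2)$ and $(\widetilde X_1,\widetilde Y_1,\widetilde X_2,\widetilde Y_2)$ be two admissible decompositions of $\mathcal U$ (with the same $d_l,d_r$) in which $X_1,X_2,\widetilde X_1,\widetilde X_2$ are left-invertible and $Y_1,Y_2,\widetilde Y_1,\widetilde Y_2$ are right-invertible. Then there exist nonzero scalars $\delta_1,\delta_2\in\mathbb{C}$ with $\delta_1\delta_2=1$ and unitary matrices $W_1\in U(d_r)$, $W_2\in U(d_l)$ such that, as matrices, $$\widetilde X_i=\delta_i\,X_iW_i,\qquad \widetilde Y_i=\frac{1}{\delta_i}\,W_i^\dagger Y_i,\qquad i=1,2.$$
   Context: Fix positive integers $d$ (physical dimension), $D$ (bond dimension), $d_l,d_r$. Let $\mathcal U=(\mathcal U^{ij}_{\alpha\beta})$ with $i,j\in\{1,\dots,d\}$, $\alpha,\beta\in\{1,\dots,D\}$. An admissible decomposition of $\mathcal U$ is a quadruple of complex arrays $X_1=((X_1)^i_{\beta,b})$, $Y_1=((Y_1)^j_{b,\alpha})$ with $b\in\{1,\dots,d_r\}$, and $X_2=((X_2)^i_{\alpha,a})$, $Y_2=((Y_2)^j_{a,\beta})$ with $a\in\{1,\dots,d_l\}$, such that (a) $\mathcal U^{ij}_{\alpha\beta}=\sum_{b}(X_1)^i_{\beta,b}(Y_1)^j_{b,\alpha}=\sum_a (X_2)^i_{\alpha,a}(Y_2)^j_{a,\beta}$ for all $i,j,\alpha,\beta$;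 (b) the matrices $u$ with rows indexed by $(a,b)$ and columns by $(j,j')$, $u_{(a,b),(j,j')}=\sum_{\gamma}(Y_2)^j_{a,\gamma}(Y_1)^{j'}_{b,\gamma}$, and $v$ with rows indexed by $(i,i')$ and columns by $(b,a)$, $v_{(i,i'),(b,a)}=\sum_\gamma (X_1)^i_{\gamma,b}(X_2)^{i'}_{\gamma,a}$, are both unitary (in particular $d_ld_r=d^2$). Matrix conventions: $X_1$ is regarded as the $(dD)\times d_r$ matrix with rows $(i,\beta)$ and columns $b$; $Y_1$ as the $d_r\times(Dd)$ matrix with rows $b$ and columns $(\alpha,j)$; $X_2$ as the $(dD)\times d_l$ matrix with rows $(i,\alpha)$ and columns $a$; $Y_2$ as the $d_l\times(dD)$ matrix with rows $a$ and columns $(j,\beta)$. Left-invertible means having a left inverse (full column rank); right-invertible means having a right inverse (full row rank). Products $X_iW_i$ and $W_i^\dagger Y_i$ are ordinary matrix products in these conventions. *)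

(* Complex numbers are modelled as complex R (= R[i]) for an
   arbitrary R : realType, i.e. (a model of) the field C. *)
From HB Require Import structures.
From mathcomp Require Import all_boot all_order all_algebra.
From mathcomp Require Import complex.
From mathcomp Require Import reals.
Set Implicit Arguments. Unset Strict Implicit. Unset Printing Implicit Defensive.
Import Order.TTheory GRing.Theory Num.Theory.
Local Open Scope ring_scope.

Definition ctrmx (C : numClosedFieldType) m n (A : 'M[C]_(m, n)) : 'M[C]_(n, m) :=
  (map_mx Num.conj A)^T.

(* (possibly rectangular) unitary matrix: A A^dagger = 1 and A^dagger A = 1
   (for finite matrices this forces m = n). *)
Definition unitary_mx (C : numClosedFieldType) m n (A : 'M[C]_(m, n)) : Prop :=
  A *m ctrmx A = 1%:M /\ ctrmx A *m A = 1%:M.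

Definition left_invertible (C : numClosedFieldType) m n (A : 'M[C]_(m, n)) : Prop :=
  exists L : 'M[C]_(n, m), L *m A = 1%:M.

Definition right_invertible (C : numClosedFieldType) m n (A : 'M[C]_(m, n)) : Prop :=
  exists R : 'M[C]_(n, m), A *m R = 1%:M.

(* Index pairing: the pair (x, y) with x : 'I_p, y : 'I_q is the row/column
   index mxvec_index x y : 'I_(p * q).
   X1 : rows (i,beta), cols b      : 'M_(d*D, dr)
   Y1 : rows b, cols (alpha,j)     : 'M_(dr, D*d)
   X2 : rows (i,alpha), cols a     : 'M_(d*D, dl)
   Y2 : rows a, cols (j,beta)      : 'M_(dl, d*D) *)

(* The matrices u and
   v of (b) are specified entrywise; since mxvec_index is a bijection
   'I_p * 'I_q -> 'I_(p*q), the entry equations determine u and v uniquely, so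
   "the matrix u with these entries is unitary" is rendered as "there is a
   matrix with these entries and it is unitary". *)
Definition admissible (C : numClosedFieldType) (d D dl dr : nat)
  (U : 'I_d -> 'I_d -> 'I_D -> 'I_D -> C)
  (X1 : 'M[C]_(d * D, dr)) (Y1 : 'M[C]_(dr, D * d))
  (X2 : 'M[C]_(d * D, dl)) (Y2 : 'M[C]_(dl, d * D)) : Prop :=
  (forall (i j : 'I_d) (al be : 'I_D),
      U i j al be = \sum_(b < dr) X1 (mxvec_index i be) b * Y1 b (mxvec_index al j)
   /\ U i j al be = \sum_(a < dl) X2 (mxvec_index i al) a * Y2 a (mxvec_index j be))
  /\ (exists u : 'M[C]_(dl * dr, d * d),
        (forall (a : 'I_dl) (b : 'I_dr) (j j' : 'I_d),
           u (mxvec_index a b) (mxvec_index j j')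
           = \sum_(g < D) Y2 a (mxvec_index j g) * Y1 b (mxvec_index g j'))
        /\ unitary_mx u)
  /\ (exists v : 'M[C]_(d * d, dr * dl),
        (forall (i i' : 'I_d) (b : 'I_dr) (a : 'I_dl),
           v (mxvec_index i i') (mxvec_index b a)
           = \sum_(g < D) X1 (mxvec_index i g) b * X2 (mxvec_index i' g) a)
        /\ unitary_mx v).

From HB Require Import structures.
From mathcomp Require Import all_boot all_order all_algebra.
From mathcomp Require Import complex.
From mathcomp Require Import reals.
From mathcomp Require Import ring.
Set Implicit Arguments. Unset Strict Implicit. Unset Printing Implicit Defensive.
Import Order.TTheory GRing.Theory Num.Theory.
Local Open Scope ring_scope.

(* Proof idea. [Xi *m Yi] and [Xti *m Yti] are two full-rank factorizations of
   the same matrix, so [Xti = Xi Gi] and [Yti = Ki Yi] with [Gi Ki = 1].  The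
   unitary [u] of condition (b) then transforms as [ut = (K2 (x) K1) u], so the
   Kronecker product [K2 (x) K1] is a co-isometry; this forces [K2 K2^dagger]
   and [K1 K1^dagger] to be the scalars [c] and [c^-1] with [c > 0].  Rescaling
   [Ki] by [sqrt] of its scalar makes it unitary, and the two scale factors
   multiply to 1. *)

Definition mxvec_unindex m n (k : 'I_(m * n)) : 'I_m * 'I_n :=
  enum_val (cast_ord (esym (mxvec_cast m n)) k).

Lemma mxvec_indexK m n (i : 'I_m) (j : 'I_n) :
  mxvec_unindex (mxvec_index i j) = (i, j).
Proof. by rewrite /mxvec_unindex /mxvec_index cast_ordK enum_rankK. Qed.

Lemma mxvec_index_eq m n (i i' : 'I_m) (j j' : 'I_n) :
  (mxvec_index i j == mxvec_index i' j') = (i == i') && (j == j').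
Proof.
apply/eqP/andP => [/(congr1 (@mxvec_unindex m n))|[/eqP-> /eqP->] //].
by rewrite !mxvec_indexK => -[-> ->].
Qed.

Lemma big_mxvec_index (R : nmodType) m n (F : 'I_(m * n) -> R) :
  \sum_(k < m * n) F k = \sum_(i < m) \sum_(j < n) F (mxvec_index i j).
Proof.
rewrite pair_big (reindex (fun p : 'I_m * 'I_n => mxvec_index p.1 p.2)) //=.
exists (@mxvec_unindex m n) => [[i j] _|k _]; first by rewrite mxvec_indexK.
by case: (mxvec_indexP k) => i j; rewrite mxvec_indexK.
Qed.

Section Development.
Variable C : numClosedFieldType.

Lemma ctrmxE m n (A : 'M[C]_(m, n)) i j : ctrmx A i j = (A j i)^*.
Proof. by rewrite !mxE. Qed.

Lemma ctrmx_mul m n p (A : 'M[C]_(m, n)) (B : 'M[C]_(n, p)) :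
  ctrmx (A *m B) = ctrmx B *m ctrmx A.
Proof. by rewrite /ctrmx map_mxM trmx_mul. Qed.

Lemma ctrmxK m n (A : 'M[C]_(m, n)) : ctrmx (ctrmx A) = A.
Proof. by apply/matrixP => i j; rewrite !ctrmxE conjCK. Qed.

Lemma ctrmxZ m n a (A : 'M[C]_(m, n)) : ctrmx (a *: A) = a^* *: ctrmx A.
Proof. by apply/matrixP => i j; rewrite !mxE rmorphM. Qed.

Lemma mulmx_ctrmx_diag_ge0 m n (A : 'M[C]_(m, n)) i : 0 <= (A *m ctrmx A) i i.
Proof. by rewrite mxE sumr_ge0 // => k _; rewrite ctrmxE mul_conjC_ge0. Qed.

Definition kronmx m n p q (A : 'M[C]_(m, n)) (B : 'M[C]_(p, q)) :
    'M[C]_(m * p, n * q) :=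
  \matrix_(r, c) (A (mxvec_unindex r).1 (mxvec_unindex c).1
                  * B (mxvec_unindex r).2 (mxvec_unindex c).2).

Lemma kronmxE m n p q (A : 'M[C]_(m, n)) (B : 'M[C]_(p, q)) i j k l :
  kronmx A B (mxvec_index i j) (mxvec_index k l) = A i k * B j l.
Proof. by rewrite mxE !mxvec_indexK. Qed.

Lemma kronmx_mul m n p q r s (A : 'M[C]_(m, n)) (B : 'M[C]_(p, q))
    (A' : 'M[C]_(n, r)) (B' : 'M[C]_(q, s)) :
  kronmx A B *m kronmx A' B' = kronmx (A *m A') (B *m B').
Proof.
apply/matrixP => x y.
case: (mxvec_indexP x) => i j; case: (mxvec_indexP y) => k l.
rewrite kronmxE !mxE big_mxvec_index big_distrl /=; apply: eq_bigr => a _.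
rewrite big_distrr /=; apply: eq_bigr => b _.
by rewrite !kronmxE mulrACA.
Qed.

Lemma ctrmx_kronmx m n p q (A : 'M[C]_(m, n)) (B : 'M[C]_(p, q)) :
  ctrmx (kronmx A B) = kronmx (ctrmx A) (ctrmx B).
Proof. by apply/matrixP => x y; rewrite !mxE rmorphM. Qed.

Lemma kronmx_eq1 m n (P : 'M[C]_m) (Q : 'M[C]_n) :
  (0 < m)%N -> (0 < n)%N -> kronmx P Q = 1%:M ->
  exists2 c, c != 0 & P = c%:M /\ Q = c^-1%:M.
Proof.
move=> m_gt0 n_gt0 PQ1.
have PQE a a' b b' : P a a' * Q b b' = ((a == a') && (b == b'))%:R.
  by rewrite -kronmxE PQ1 mxE mxvec_index_eq.
pose i0 := Ordinal m_gt0; pose j0 := Ordinal n_gt0.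
have PQ00 : P i0 i0 * Q j0 j0 = 1 by rewrite PQE !eqxx.
have P00 : P i0 i0 != 0.
  by apply: contra_eq_neq PQ00 => ->; rewrite mul0r eq_sym oner_neq0.
have Q00 : Q j0 j0 != 0.
  by apply: contra_eq_neq PQ00 => ->; rewrite mulr0 eq_sym oner_neq0.
exists (P i0 i0) => //; split; apply/matrixP => a a'; rewrite mxE.
  by apply: (mulIf Q00); rewrite PQE eqxx andbT mulrnAl PQ00.
by apply: (mulfI P00); rewrite PQE eqxx mulrnAr mulfV.
Qed.

(* The matrix [u] of condition (b) of [admissible] is [contractmx Y2 Y1]. *)
Definition contractmx m n p q (A : 'M[C]_(m, p * q)) (B : 'M[C]_(n, q * p)) :
    'M[C]_(m * n, p * p) :=
  \matrix_(r, c) \sum_(g < q)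
     A (mxvec_unindex r).1 (mxvec_index (mxvec_unindex c).1 g)
     * B (mxvec_unindex r).2 (mxvec_index g (mxvec_unindex c).2).

Lemma contractmxE m n p q (A : 'M[C]_(m, p * q)) (B : 'M[C]_(n, q * p)) a b j j' :
  contractmx A B (mxvec_index a b) (mxvec_index j j')
  = \sum_(g < q) A a (mxvec_index j g) * B b (mxvec_index g j').
Proof. by rewrite mxE !mxvec_indexK. Qed.

Lemma contractmx_mul m n m' n' p q (H : 'M[C]_(m', m)) (K : 'M[C]_(n', n))
    (A : 'M[C]_(m, p * q)) (B : 'M[C]_(n, q * p)) :
  contractmx (H *m A) (K *m B) = kronmx H K *m contractmx A B.
Proof.
apply/matrixP => x y.
case: (mxvec_indexP x) => a b; case: (mxvec_indexP y) => j j'.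
rewrite contractmxE mxE big_mxvec_index.
under eq_bigr do rewrite !mxE big_distrl /=.
rewrite exchange_big /=; apply: eq_bigr => a' _.
under eq_bigr do rewrite big_distrr /=.
rewrite exchange_big /=; apply: eq_bigr => b' _.
rewrite kronmxE contractmxE big_distrr /=; apply: eq_bigr => g _.
by rewrite mulrACA.
Qed.

Lemma unitary_mulmx_ctrmx m n (A : 'M[C]_m) (V : 'M[C]_(m, n)) :
  unitary_mx (A *m V) -> unitary_mx V -> A *m ctrmx A = 1%:M.
Proof.
move=> [AV _] [V1 _]; rewrite -AV ctrmx_mul mulmxA -(mulmxA A V) V1.
by rewrite mulmx1.
Qed.

Lemma full_rank_factorization_uniq m n p (X X' : 'M[C]_(m, n))
    (Y Y' : 'M[C]_(n, p)) :
  X *m Y = X' *m Y' -> left_invertible X -> left_invertible X' ->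
  right_invertible Y -> right_invertible Y' ->
  exists G H : 'M[C]_n, [/\ G *m H = 1%:M, X' = X *m G & Y' = H *m Y].
Proof.
move=> XY [L LX] [L' LX'] [R YR] [R' YR'].
have X'E : X' = X *m (Y *m R') by rewrite mulmxA XY -mulmxA YR' mulmx1.
have Y'E : Y' = (L' *m X) *m Y by rewrite -mulmxA XY mulmxA LX' mul1mx.
exists (L *m X'), (Y' *m R); split.
- by rewrite mulmxA -(mulmxA L) -XY mulmxA LX mul1mx YR.
- by rewrite {2}X'E (mulmxA L X) LX mul1mx -X'E.
- by rewrite {2}Y'E -(mulmxA _ Y R) YR mulmx1 -Y'E.
Qed.

Lemma unitary_of_scalar_gram n (G H : 'M[C]_n) c :
  0 < c -> G *m H = 1%:M -> H *m ctrmx H = c%:M ->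
  exists W, [/\ unitary_mx W, G = (sqrtC c)^-1 *: W & H = sqrtC c *: ctrmx W].
Proof.
move=> c_gt0 GH HH; set s := sqrtC c.
have s_gt0 : 0 < s by rewrite sqrtC_gt0.
have s_neq0 : s != 0 by rewrite gt_eqF.
have conj_sV : (s^-1)^* = s^-1 by rewrite geC0_conj // invr_ge0 ltW.
have ssE : s * s = c by rewrite -expr2 sqrtCK.
have HtE : ctrmx H = c *: G.
  by rewrite -[ctrmx H]mul1mx -GH -mulmxA HH mul_mx_scalar.
pose W := s^-1 *: ctrmx H.
have WtE : ctrmx W = s^-1 *: H by rewrite ctrmxZ ctrmxK conj_sV.
have WtW : ctrmx W *m W = 1%:M.
  rewrite WtE -scalemxAl -scalemxAr HH !scale_scalar_mx -ssE.
  by congr (_%:M); field.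
exists W; split.
- by split=> //; apply: mulmx1C.
- by rewrite /W HtE !scalerA -ssE mulrA divfK // mulVf // scale1r.
- by rewrite WtE scalerA mulfV // scale1r.
Qed.

Lemma admissible_mulmx_eq d D dl dr (U : 'I_d -> 'I_d -> 'I_D -> 'I_D -> C)
    (X1 X1' : 'M[C]_(d * D, dr)) (Y1 Y1' : 'M[C]_(dr, D * d))
    (X2 X2' : 'M[C]_(d * D, dl)) (Y2 Y2' : 'M[C]_(dl, d * D)) :
  admissible U X1 Y1 X2 Y2 -> admissible U X1' Y1' X2' Y2' ->
  X1 *m Y1 = X1' *m Y1' /\ X2 *m Y2 = X2' *m Y2'.
Proof.
move=> [UE _] [UE' _]; split; apply/matrixP => x y.
  case: (mxvec_indexP x) => i be; case: (mxvec_indexP y) => al j.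
  by rewrite !mxE -(UE i j al be).1 -(UE' i j al be).1.
case: (mxvec_indexP x) => i al; case: (mxvec_indexP y) => j be.
by rewrite !mxE -(UE i j al be).2 -(UE' i j al be).2.
Qed.

Lemma admissible_contractmx_unitary d D dl dr
    (U : 'I_d -> 'I_d -> 'I_D -> 'I_D -> C)
    (X1 : 'M[C]_(d * D, dr)) (Y1 : 'M[C]_(dr, D * d))
    (X2 : 'M[C]_(d * D, dl)) (Y2 : 'M[C]_(dl, d * D)) :
  admissible U X1 Y1 X2 Y2 -> unitary_mx (contractmx Y2 Y1).
Proof.
move=> [_ [[u [uE uU]] _]]; suff -> : contractmx Y2 Y1 = u by [].
apply/matrixP => x y; case: (mxvec_indexP x) => a b.
by case: (mxvec_indexP y) => j j'; rewrite contractmxE uE.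
Qed.

End Development.

Theorem mainTheorem2 (R : realType) (d D dl dr : nat)
  (_ : (0 < d)%N) (_ : (0 < D)%N) (_ : (0 < dl)%N) (_ : (0 < dr)%N)
  (U : 'I_d -> 'I_d -> 'I_D -> 'I_D -> R[i])
  (X1 Xt1 : 'M[R[i]]_(d * D, dr)) (Y1 Yt1 : 'M[R[i]]_(dr, D * d))
  (X2 Xt2 : 'M[R[i]]_(d * D, dl)) (Y2 Yt2 : 'M[R[i]]_(dl, d * D)) :
  admissible U X1 Y1 X2 Y2 ->
  admissible U Xt1 Yt1 Xt2 Yt2 ->
  left_invertible X1 -> left_invertible X2 ->
  left_invertible Xt1 -> left_invertible Xt2 ->
  right_invertible Y1 -> right_invertible Y2 ->
  right_invertible Yt1 -> right_invertible Yt2 ->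
  exists (delta1 delta2 : R[i]) (W1 : 'M[R[i]]_dr) (W2 : 'M[R[i]]_dl),
    delta1 != 0 /\ delta2 != 0 /\ delta1 * delta2 = 1 /\
    unitary_mx W1 /\ unitary_mx W2 /\
    Xt1 = delta1 *: (X1 *m W1) /\ Yt1 = delta1^-1 *: (ctrmx W1 *m Y1) /\
    Xt2 = delta2 *: (X2 *m W2) /\ Yt2 = delta2^-1 *: (ctrmx W2 *m Y2).
Proof.
have dl_gt0 : (0 < dl)%N by assumption.
have dr_gt0 : (0 < dr)%N by assumption.
move=> adm admt lX1 lX2 lXt1 lXt2 rY1 rY2 rYt1 rYt2.
have [XY1 XY2] := admissible_mulmx_eq adm admt.
have [G1 [K1 [GK1 Xt1E Yt1E]]] := full_rank_factorization_uniq XY1 lX1 lXt1 rY1 rYt1.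
have [G2 [K2 [GK2 Xt2E Yt2E]]] := full_rank_factorization_uniq XY2 lX2 lXt2 rY2 rYt2.
have KK : kronmx K2 K1 *m ctrmx (kronmx K2 K1) = 1%:M.
  apply: (unitary_mulmx_ctrmx (V := contractmx Y2 Y1)).
    by rewrite -contractmx_mul -Yt1E -Yt2E; apply: admissible_contractmx_unitary admt.
  exact: admissible_contractmx_unitary adm.
rewrite ctrmx_kronmx kronmx_mul in KK.
have [c c_neq0 [K2K2 K1K1]] := kronmx_eq1 dl_gt0 dr_gt0 KK.
have c_gt0 : 0 < c.
  have := mulmx_ctrmx_diag_ge0 K2 (Ordinal dl_gt0).
  by rewrite K2K2 mxE eqxx mulr1n le0r (negPf c_neq0).
have cV_gt0 : 0 < c^-1 by rewrite invr_gt0.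
have [W1 [W1U G1E K1E]] := unitary_of_scalar_gram cV_gt0 GK1 K1K1.
have [W2 [W2U G2E K2E]] := unitary_of_scalar_gram c_gt0 GK2 K2K2.
exists (sqrtC c^-1)^-1, (sqrtC c)^-1, W1, W2.
rewrite !invr_eq0 !sqrtC_eq0 invr_eq0 c_neq0 !invrK.
rewrite Xt1E G1E Yt1E K1E Xt2E G2E Yt2E K2E -!scalemxAr -!scalemxAl.
do 2![split=> //]; split=> //.
by rewrite -invfM -sqrtCM ?mulVf ?sqrtC1 ?invr1 // nnegrE ?(ltW c_gt0) ?(ltW cV_gt0).
Qed.
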